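(* Let $V$ be a vertex operator algebra over $\mathbb{F}$, $n\ge 0$, and $0\le s\le t$ integers. For all $a,c\in V$ and homogeneous $b\in V$, both $a*_n(b\circ^s_{n,t}c)$ and $(b\circ^s_{n,t}c)*_na$ lie in $O_n(V)$. More precisely, for homogeneous $a,b,c$, $$a*_n(b\circ^s_{n,t}c)\equiv\sum_{m=0}^n(-1)^m\binom{m+n}{n}\sum_{j\ge0}\binom{\deg a+n}{j}\sum_{i\ge0}\binom{-n-m-1}{i}(a_{i+j}b)\circ^{\,i+n+1+s}_{n,\,n+m+1+i+t}\,c \pmod{O_n(V)},$$ and $\mathrm{Res}_{z}Y(a,z)(b\circ^s_{n,t}c)(1+z)^{\deg a-1}\equiv\sum_{j\ge0}\binom{\deg a-1}{j}(a_jb)\circ^s_{n,t}c\pmod{O_n(V)}$.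
   Context: Standing assumptions: $\mathbb{F}$ is an algebraically closed field with $\mathrm{char}\,\mathbb{F}\neq 2$. $V$ is a vertex operator algebra over $\mathbb{F}$: a $\mathbb{Z}$-graded vertex algebra $V=\bigoplus_k V_k$, $Y(v,z)=\sum_k v_kz^{-k-1}$, finite-dimensional graded pieces, $V_k=0$ for $k\ll0$, Virasoro vector $\omega\in V_2$, $Y(\omega,z)=\sum L(k)z^{-k-2}$, $u_kv\in V_{s+t-k-1}$ for $u\in V_s,v\in V_t$, Virasoro relations, $\frac{d}{dz}Y(v,z)=Y(L(-1)v,z)$, $L(0)|_{V_k}=k$. $\deg a=s$ for $a\in V_s$. $(1+z)^k=\sum_{i\ge0}\binom{k}{i}z^i$. For $n\ge0$, $0\le s\le t$, homogeneous $a$: $a\circ^s_{n,t}b=\mathrm{Res}_z\,Y(a,z)b\,\frac{(1+z)^{\deg a+n+s}}{z^{2n+2+t}}$ (extended linearly in $a$ when $a$ is a sum of homogeneous vectors). $O_n(V)$ is the span of all $a\circ^s_{n,t}b$ ($0\le s\le t$) and all $L(-1)a+L(0)a$. $a*_nb=\sum_{m=0}^n(-1)^m\binom{m+n}{n}\mathrm{Res}_z\,Y(a,z)b\frac{(1+z)^{\deg a+n}}{z^{n+m+1}}$ for homogeneous $a$, extended linearly. *)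

From HB Require Import structures.
From mathcomp Require Import all_boot all_order all_algebra.
From Stdlib Require Import ClassicalEpsilon.
Set Implicit Arguments. Unset Strict Implicit. Unset Printing Implicit Defensive.
Import Order.TTheory GRing.Theory Num.Theory.
Local Open Scope ring_scope.

(* Generalized binomial coefficient binom(r, i) for r an integer:
   binom(m, i) = 'C(m, i) for m >= 0,
   binom(-(m+1), i) = (-1)^i 'C(m+i, i). *)
Definition binz (r : int) (i : nat) : int :=
  match r with
  | Posz m => ('C(m, i))%:Z
  | Negz m => (-1) ^+ i * ('C(m + i, i))%:Z
  end.

Section Sums.
Variable M : nmodType.

(* Sum over i >= 0 of a finitely supported family (0 if not finitely supported). *)
Definition fsum (f : nat -> M) : M :=
  match excluded_middle_informative (exists N : nat, forall i, (N <= i)%N -> f i = 0) with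
  | left H => \sum_(i < proj1_sig (constructive_indefinite_description _ H)) f i
  | right _ => 0
  end.

(* Sum over k in Z of a finitely supported family (0 if not finitely supported). *)
Definition isum (g : int -> M) : M :=
  match excluded_middle_informative (exists s : seq int, forall k, k \notin s -> g k = 0) with
  | left H => \sum_(k <- undup (proj1_sig (constructive_indefinite_description _ H))) g k
  | right _ => 0
  end.
End Sums.

(* A vertex operator algebra structure on the F-vector space V.
   proj k = projection onto the graded piece V_k;  mode u k v = u_k v. *)
Record VOA (F : fieldType) (V : lmodType F) := {
  proj : int -> V -> V;
  proj_linear : forall k (a : F) (u v : V), proj k (a *: u + v) = a *: proj k u + proj k v;
  proj_proj : forall k l v, proj k (proj l v) = if k == l then proj l v else 0;
  proj_decomp : forall v, exists s : seq int,
      [/\ uniq s, v = \sum_(k <- s) proj k v & forall k, k \notin s -> proj k v = 0];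
  proj_findim : forall k, exists (m : nat) (e : 'I_m -> V),
      forall v, proj k v = v -> exists c : 'I_m -> F, v = \sum_(i < m) c i *: e i;
  proj_bounded : exists k0 : int, forall k v, k < k0 -> proj k v = 0;
  mode : V -> int -> V -> V;
  mode_linl : forall k (a : F) u u' v, mode (a *: u + u') k v = a *: mode u k v + mode u' k v;
  mode_linr : forall k (a : F) u v v', mode u k (a *: v + v') = a *: mode u k v + mode u k v';
  mode_trunc : forall u v, exists N : int, forall k, N <= k -> mode u k v = 0;
  vac : V;
  vac_deg : proj 0 vac = vac;
  vac_mode : forall k v, mode vac k v = if k == -1 then v else 0;
  mode_vac_m1 : forall u, mode u (-1) vac = u;
  mode_vac_pos : forall u k, 0 <= k -> mode u k vac = 0;
  borcherds : forall (p q r : int) u v w,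
      fsum (fun i => (binz p i)%:~R *: mode (mode u (r + i%:Z) v) (p + q - i%:Z) w)
    = fsum (fun i => ((-1) ^+ i * (binz r i)%:~R) *:
          (mode u (p + r - i%:Z) (mode v (q + i%:Z) w)
           - (-1) ^+ `|r|%N *: mode v (q + r - i%:Z) (mode u (p + i%:Z) w)));
  mode_deg : forall (s t k : int) u v, proj s u = u -> proj t v = v ->
      proj (s + t - k - 1) (mode u k v) = mode u k v;
  omega : V;
  omega_deg : proj 2 omega = omega;
  central_charge : F;
  (* L(m) = omega_(m+1);  [L(m),L(k)] = (m-k)L(m+k) + (m^3-m)/12 delta_{m+k,0} c,
     with (m^3-m)/12 written as binom(m+1,3)/2 *)
  virasoro : forall (m k : int) w,
      mode omega (m + 1) (mode omega (k + 1) w) - mode omega (k + 1) (mode omega (m + 1) w)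
    = (m - k)%:~R *: mode omega (m + k + 1) w
      + (if m + k == 0 then ((binz (m + 1) 3)%:~R / 2%:R * central_charge) *: w else 0);
  (* d/dz Y(v,z) = Y(L(-1)v,z), i.e. (L(-1)v)_k = -k v_(k-1) *)
  L_deriv : forall v k w, mode (mode omega 0 v) k w = - (k%:~R) *: mode v (k - 1) w;
  L0_grade : forall k v, proj k v = v -> mode omega 1 v = k%:~R *: v
}.

Section Ops.
Variables (F : fieldType) (V : lmodType F) (A : VOA V).

Definition Lop (k : int) (v : V) : V := mode A (omega A) (k + 1) v.

Definition homog (d : int) (v : V) : Prop := proj A d v = v.

(* Res_z Y(a,z) b (1+z)^K z^(-N) = sum_{j>=0} binom(K,j) a_(j-N) b *)
Definition resY (a b : V) (K N : int) : V :=
  fsum (fun j => (binz K j)%:~R *: mode A a (j%:Z - N) b).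

Definition lin_ext (f : int -> V -> V -> V) (a b : V) : V :=
  isum (fun k => f k (proj A k a) b).

Definition circ_h (n s t : nat) (d : int) (a b : V) : V :=
  resY a b (d + n%:Z + s%:Z) (2 * n%:Z + 2 + t%:Z).

Definition circ (n s t : nat) (a b : V) : V := lin_ext (circ_h n s t) a b.

Definition star_h (n : nat) (d : int) (a b : V) : V :=
  \sum_(m < n.+1) ((-1) ^+ m * ('C(m + n, n))%:R) *: resY a b (d + n%:Z) (n%:Z + m%:Z + 1).

Definition star (n : nat) (a b : V) : V := lin_ext (star_h n) a b.

Definition On_gen (n : nat) (x : V) : Prop :=
  (exists (a b : V) (s t : nat), (s <= t)%N /\ x = circ n s t a b)
  \/ (exists a : V, x = Lop (-1) a + Lop 0 a).

Definition On (n : nat) (v : V) : Prop :=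
  exists (m : nat) (c : 'I_m -> F) (g : 'I_m -> V),
    (forall i, On_gen n (g i)) /\ v = \sum_(i < m) c i *: g i.
End Ops.

From HB Require Import structures.
From mathcomp Require Import all_boot all_order all_algebra.
From mathcomp Require Import zify ring.
From Stdlib Require Import FunctionalExtensionality ClassicalEpsilon.
Import Order.TTheory GRing.Theory Num.Theory.
Set Implicit Arguments. Unset Strict Implicit. Unset Printing Implicit Defensive.
Local Open Scope ring_scope.

(* Everything follows from two consequences of the Borcherds identity,
   phrased for the residues [resY a v K N = Res_z Y(a,z) v (1+z)^K z^-N].
   By the commutator formula (the case r = 0), Res_z Y(a,z) (b o^s_{n,t} c)
   differs from b o^s_{n,t} (Res_z Y(a,z) c) by a sum of products
   (a_k b) o^{s'}_{n,t'} c; for the exponents occurring in a *_n (b o c) and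
   in Res_z Y(a,z) (b o c) (1+z)^(deg a - 1) these have s' <= t', so they are
   generators of O_n(V). For (b o^s_{n,t} c) *_n a one expands b o^s_{n,t} c
   into the homogeneous vectors b_(j-N) c and applies the associativity form
   of the identity (the case r = -N): the result is a sum of products
   b o^{s'}_{n,t'} v and c o^{s'}_{n,t'} v, again with s' <= t'. The stated
   congruences hold because both of their sides lie in O_n(V). *)

Definition ffactz (x : int) (k : nat) : int := \prod_(i < k) (x - i%:Z).

Lemma ffactz0 x : ffactz x 0 = 1.
Proof. by rewrite /ffactz big_ord0. Qed.

Lemma ffactzS x k : ffactz x k.+1 = ffactz x k * (x - k%:Z).
Proof. by rewrite /ffactz big_ord_recr. Qed.

Lemma ffactz_nat (m k : nat) : ffactz m%:Z k = (m ^_ k)%:Z.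
Proof.
elim: k => [|k IH]; first by rewrite ffactz0 ffactn0.
rewrite ffactzS IH ffactnSr; case: (leqP k m) => hk; first by rewrite PoszM -subzn.
by rewrite ffact_small ?mul0r.
Qed.

Lemma ffactz_neg (m k : nat) : ffactz (Negz m) k = (-1) ^+ k * ((m + k) ^_ k)%:Z.
Proof.
elim: k => [|k IH]; first by rewrite ffactz0 ffactn0 expr0 mul1r.
rewrite ffactzS IH addnS ffactSS NegzE exprS PoszM.
have -> : Posz (m + k).+1 = m%:Z + 1 + k%:Z by rewrite -addn1 !PoszD; ring.
ring.
Qed.

Lemma binz_ffactz x k : binz x k * (k`!)%:Z = ffactz x k.
Proof.
case: x => m /=; first by rewrite ffactz_nat -PoszM bin_ffact.
by rewrite ffactz_neg -mulrA -PoszM bin_ffact.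
Qed.

Lemma fact_neq0z k : (k`!)%:Z != 0.
Proof. by rewrite eqz_nat -lt0n fact_gt0. Qed.

Lemma ffactz_addn x p q : ffactz x (p + q) = ffactz x p * ffactz (x - p%:Z) q.
Proof.
elim: q => [|q IH]; first by rewrite addn0 ffactz0 mulr1.
rewrite addnS !ffactzS IH -mulrA PoszD; congr (_ * (_ * _)); ring.
Qed.

Lemma ffactzD x y k :
  ffactz (x + y) k = \sum_(i < k.+1) ('C(k, i))%:Z * (ffactz x i * ffactz y (k - i)).
Proof.
elim: k => [|k IH]; first by rewrite big_ord_recl big_ord0 !ffactz0 bin0 !mulr1 addr0.
have step (i : 'I_k.+1) :
  'C(k, i)%:Z * (ffactz x i * ffactz y (k - i)) * (x + y - k%:Z)
  = 'C(k, i)%:Z * (ffactz x i.+1 * ffactz y (k - i))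
    + 'C(k, i)%:Z * (ffactz x i * ffactz y (k.+1 - i)).
  case: i => i hi /=; rewrite !ffactzS subSn // ffactzS -subzn //; ring.
rewrite ffactzS IH big_distrl /= (eq_bigr _ (fun i _ => step i)) big_split /=.
rewrite [RHS]big_ord_recl /= bin0 subn0.
under [X in _ = _ + X]eq_bigr => i _ do rewrite /bump /= binS PoszD mulrDl subSS.
rewrite big_split /= [in RHS]big_ord_recr /= bin_small // mul0r addr0.
rewrite [X in _ + X = _]big_ord_recl /= bin0 subn0.
by rewrite addrCA [X in _ + X = _]addrC.
Qed.

Lemma binzD x y k : binz (x + y) k = \sum_(i < k.+1) binz x i * binz y (k - i).
Proof.
apply: (mulIf (fact_neq0z k)); rewrite binz_ffactz ffactzD big_distrl /=.
apply: eq_bigr => -[i hi] _ /=; rewrite -!binz_ffactz -(bin_fact (n := k) (m := i)) //.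
by rewrite !PoszM; ring.
Qed.

Lemma binz_mul_bin x (j p : nat) : (p <= j)%N ->
  binz x j * ('C(j, p))%:Z = binz x p * binz (x - p%:Z) (j - p).
Proof.
move=> hpj; apply: (mulIf (fact_neq0z j)).
transitivity ('C(j, p)%:Z * (binz x j * (j`!)%:Z)); first by ring.
rewrite binz_ffactz -(subnKC hpj) ffactz_addn -!binz_ffactz addKn.
by rewrite -(bin_fact (leq_addr (j - p) p)) addKn !PoszM; ring.
Qed.

Lemma ex_bound_uniform (P : nat -> nat -> Prop) (I : nat) :
  (forall i, exists D0, forall D, (D0 <= D)%N -> P i D) ->
  exists D0, forall i D, (i < I)%N -> (D0 <= D)%N -> P i D.
Proof.
move=> hP; elim: I => [|I [D0 hD0]]; first by exists 0%N.
have [D1 hD1] := hP I.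
exists (maxn D0 D1) => i D; rewrite ltnS leq_eqVlt geq_max => /orP [/eqP -> | hi] /andP [h0 h1].
  exact: hD1.
exact: hD0.
Qed.

Section FiniteSums.
Variable M : nmodType.

Definition fsupp (f : nat -> M) (B : nat) := forall i, (B <= i)%N -> f i = 0.

Lemma fsupp_mono f B C : fsupp f B -> (B <= C)%N -> fsupp f C.
Proof. by move=> hf hBC i hi; apply: hf; apply: leq_trans hi. Qed.

Lemma big_ord_widen_fsupp (f : nat -> M) (B C : nat) : fsupp f B -> (B <= C)%N ->
  \sum_(i < C) f i = \sum_(i < B) f i.
Proof.
move=> hf hBC; rewrite [RHS](big_ord_widen _ _ hBC) [RHS]big_mkcond /=.
by apply: eq_bigr => i _; case: ltnP => // hi; rewrite hf.
Qed.

Lemma fsumE (f : nat -> M) B : fsupp f B -> fsum f = \sum_(i < B) f i.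
Proof.
move=> hf; rewrite /fsum; case: excluded_middle_informative => [H|[]]; last by exists B.
case: (constructive_indefinite_description _ H) => N0 hN0 /=.
rewrite -(@big_ord_widen_fsupp f N0 (maxn N0 B)) ?leq_maxl //.
by rewrite (@big_ord_widen_fsupp f B (maxn N0 B)) ?leq_maxr.
Qed.

Lemma eq_fsum (f g : nat -> M) : f =1 g -> fsum f = fsum g.
Proof. by move=> /functional_extensionality ->. Qed.

Lemma fsumD (f g : nat -> M) B : fsupp f B -> fsupp g B ->
  fsum (fun i => f i + g i) = fsum f + fsum g.
Proof.
move=> hf hg; rewrite (fsumE hf) (fsumE hg) (fsumE (B := B)) ?big_split //.
by move=> i hi; rewrite hf ?hg ?addr0.
Qed.

Lemma big_ord_shift (g : nat -> M) (p C : nat) :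
  \sum_(k < C) (if (p <= k)%N then g (k - p)%N else 0) = \sum_(j < C - p) g j.
Proof.
case: (leqP p C) => hpC; last first.
  rewrite big1 => [|i _]; last by rewrite leqNgt (ltn_trans (ltn_ord i) hpC).
  by move/ltnW: hpC; rewrite -subn_eq0 => /eqP ->; rewrite big_ord0.
rewrite -(big_mkord xpredT (fun k => if (p <= k)%N then g (k - p)%N else 0)).
rewrite -(big_mkord xpredT g) (big_cat_nat (leq0n p) hpC) /= big_nat big1 ?add0r; last first.
  by move=> i /andP [_ hi]; rewrite leqNgt hi.
rewrite -{1}(add0n p) big_addn /= big_nat [RHS]big_nat.
by apply: eq_bigr => i _; rewrite leq_addl addnK.
Qed.

Lemma big_ord_triangle (h : nat -> nat -> M) C :
  \sum_(k < C) \sum_(i < k.+1) h i (k - i)%N = \sum_(i < C) \sum_(j < C - i) h i j.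
Proof.
elim: C => [|C IH]; first by rewrite !big_ord0.
rewrite big_ord_recr /= IH [RHS]big_ord_recr /= subSn // subnn big_ord1.
under [X in _ = X + _]eq_bigr => i _ do rewrite (subSn (ltnW (ltn_ord i))) big_ord_recr.
by rewrite big_split [X in _ + X = _]big_ord_recr /= subnn addrA.
Qed.

End FiniteSums.

Section BinomialSums.
Variables (F : fieldType) (V : lmodType F).

Lemma fsumZ (c : F) (f : nat -> V) B : fsupp f B ->
  fsum (fun i => c *: f i) = c *: fsum f.
Proof.
move=> hf; rewrite (fsumE hf) (fsumE (B := B)) ?scaler_sumr //.
by move=> i hi; rewrite hf ?scaler0.
Qed.

Lemma sum_binzD (x y : int) (Y : nat -> V) (C D1 D2 D3 : nat) : fsupp Y C ->
  (C <= D1)%N -> (C <= D2)%N -> (C <= D3)%N ->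
  \sum_(i < D1) (binz (x + y) i)%:~R *: Y i
  = \sum_(p < D2) (binz x p)%:~R *: \sum_(q < D3) (binz y q)%:~R *: Y (p + q)%N.
Proof.
move=> hY h1 h2 h3.
pose h p q := ((binz x p)%:~R * (binz y q)%:~R) *: Y (p + q)%N.
have hh p q : (C <= p + q)%N -> h p q = 0 by move=> hpq; rewrite /h hY ?scaler0.
transitivity (\sum_(i < D1) \sum_(p < i.+1) h p (i - p)%N).
  apply: eq_bigr => -[i hi] _ /=; rewrite binzD rmorph_sum /= scaler_suml.
  by apply: eq_bigr => -[p hp] _ /=; rewrite /h rmorphM /= subnKC // -ltnS.
rewrite big_ord_triangle.
rewrite (@big_ord_widen_fsupp _ (fun p => \sum_(q < D1 - p) h p q) C) //; last first.
  by move=> p hp; rewrite big1 // => q _; apply: hh; apply: leq_trans hp (leq_addr _ _).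
pose g p := (binz x p)%:~R *: \sum_(q < D3) (binz y q)%:~R *: Y (p + q)%N.
rewrite (@big_ord_widen_fsupp _ g C) //; last first.
  move=> p hp; rewrite /g big1 ?scaler0 // => q _.
  by rewrite hY ?scaler0 //; apply: leq_trans hp (leq_addr _ _).
apply: eq_bigr => -[p hp] _ /=; rewrite /g.
have hq : fsupp (fun q => (binz y q)%:~R *: Y (p + q)%N) (C - p).
  by move=> q hq; rewrite hY ?scaler0 //; lia.
rewrite (big_ord_widen_fsupp hq) ?(leq_trans (leq_subr _ _) h3) // scaler_sumr.
rewrite (@big_ord_widen_fsupp _ (h p) (C - p)) => [|q hq'|]; last 2 first.
- by apply: hh; lia.
- exact: leq_sub2r.
by apply: eq_bigr => q _; rewrite /h scalerA.
Qed.

Lemma sum_binz_bin (K : int) (p D : nat) (G : nat -> V) : (p <= D)%N ->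
  \sum_(j < D) ((binz K j)%:~R * 'C(j, p)%:R) *: G j
  = (binz K p)%:~R *: \sum_(e < D - p) (binz (K - p%:Z) e)%:~R *: G (p + e)%N.
Proof.
move=> hpD; rewrite -(big_ord_shift (fun e => (binz (K - p%:Z) e)%:~R *: G (p + e)%N)).
rewrite scaler_sumr; apply: eq_bigr => -[j hj] _ /=; case: (leqP p j) => hpj.
  by rewrite -[_%:R]/((Posz 'C(j, p))%:~R) -rmorphM /= binz_mul_bin // rmorphM -scalerA subnKC.
by rewrite bin_small // mulr0 scale0r scaler0.
Qed.

(* The coefficients, paired with [Z], of
   [(1+z)^b * (d/dz)^p (1+z)^K / p! = binom(K, p) (1+z)^(b+K-p)]. *)
Lemma sum_binz_bin_conv (K b : int) (p C D : nat) (Z : nat -> V) :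
  fsupp Z C -> (C + p <= D)%N ->
  \sum_(j1 < D) \sum_(j2 < D)
     ((binz K j1)%:~R * 'C(j1, p)%:R * (binz b j2)%:~R) *: Z (j1 - p + j2)%N
  = (binz K p)%:~R *: \sum_(j < D) (binz (b + K - p%:Z) j)%:~R *: Z j.
Proof.
move=> hZ hD.
pose G j1 := \sum_(j2 < D) (binz b j2)%:~R *: Z (j1 - p + j2)%N.
transitivity (\sum_(j1 < D) ((binz K j1)%:~R * 'C(j1, p)%:R) *: G j1).
  apply: eq_bigr => j1 _; rewrite /G scaler_sumr.
  by apply: eq_bigr => j2 _; rewrite scalerA.
rewrite sum_binz_bin; last by lia.
rewrite -addrA (@sum_binzD b (K - p%:Z) Z C D D (D - p)) //; try lia.
congr (_ *: _); rewrite /G.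
under eq_bigr => e _ do rewrite scaler_sumr.
rewrite exchange_big /=; apply: eq_bigr => j2 _.
rewrite scaler_sumr; apply: eq_bigr => e _.
by rewrite addKn !scalerA mulrC addnC.
Qed.

Lemma exchange_big4 (C D : nat) (T : nat -> nat -> nat -> nat -> V) :
  \sum_(j1 < D) \sum_(j2 < D) \sum_(p < C) \sum_(q < C) T p q j1 j2
  = \sum_(p < C) \sum_(q < C) \sum_(j1 < D) \sum_(j2 < D) T p q j1 j2.
Proof.
transitivity (\sum_(j1 < D) \sum_(p < C) \sum_(q < C) \sum_(j2 < D) T p q j1 j2).
  by apply: eq_bigr => j1 _; rewrite exchange_big; apply: eq_bigr => p _; rewrite exchange_big.
by rewrite exchange_big; apply: eq_bigr => p _; rewrite exchange_big.
Qed.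

Lemma sum_binz_commutator (X : nat -> int -> V) (C : nat) (K b : int) (M N D : nat) :
  (forall i L, (C <= i)%N -> X i L = 0) -> (forall i L, C%:Z <= L -> X i L = 0) ->
  (M + N + 3 * C <= D)%N ->
  \sum_(j1 < D) \sum_(j2 < D) ((binz K j1)%:~R * (binz b j2)%:~R) *:
     \sum_(i < C) (binz (j1%:Z - M%:Z) i)%:~R *:
        X i (j1%:Z + j2%:Z - M%:Z - N%:Z - i%:Z)
  = \sum_(p < C) (binz K p)%:~R *: \sum_(q < C) (binz (- M%:Z) q)%:~R *:
      \sum_(j < D) (binz (b + K - p%:Z) j)%:~R *: X (q + p)%N (j%:Z - (N + M + q)%:Z).
Proof.
move=> hX1 hX2 hD.
pose Z q p j := X (q + p)%N (j%:Z - (N + M + q)%:Z).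
pose T p q j1 j2 := (binz (- M%:Z) q)%:~R *:
  (((binz K j1)%:~R * 'C(j1, p)%:R * (binz b j2)%:~R) *: Z q p (j1 - p + j2)%N).
transitivity (\sum_(j1 < D) \sum_(j2 < D) \sum_(p < C) \sum_(q < C) T p q j1 j2).
  apply: eq_bigr => j1 _; apply: eq_bigr => j2 _.
  rewrite (@sum_binzD j1%:Z (- M%:Z) (fun i => X i (j1%:Z + j2%:Z - M%:Z - N%:Z - i%:Z))
    C C C C) //; last by move=> i hi; rewrite hX1.
  rewrite scaler_sumr; apply: eq_bigr => -[p hp] _ /=.
  rewrite scalerA scaler_sumr; apply: eq_bigr => -[q hq] _ /=.
  rewrite /T /Z !scalerA -pmulrn; case: (leqP p j1) => hpj; last first.
    by rewrite bin_small // mulr0n !(mulr0, mul0r) !scale0r.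
  congr (_ *: X _ _); [ring | lia | lia].
rewrite exchange_big4; apply: eq_bigr => -[p hp] _ /=.
rewrite scaler_sumr; apply: eq_bigr => -[q hq] _ /=.
under eq_bigr => j1 _ do rewrite -scaler_sumr.
rewrite -scaler_sumr (@sum_binz_bin_conv K b p (M + N + 2 * C)) ?scalerA 1?mulrC //.
- by move=> j hj; apply: hX2; lia.
- lia.
Qed.

Lemma sum_binz_jacobi (Y : nat -> int -> V) (C : nat) (b E : int) (M D : nat) :
  (forall i L, (C <= i)%N -> Y i L = 0) -> (forall i L, C%:Z <= L -> Y i L = 0) ->
  (M + 2 * C <= D)%N ->
  \sum_(p < D) \sum_(e < D) ((binz b p)%:~R * (binz (E - b) e)%:~R) *:
     \sum_(i < C) (binz p%:Z i)%:~R *: Y i (p%:Z + (e%:Z - M%:Z) - i%:Z)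
  = \sum_(i < C) (binz b i)%:~R *: \sum_(l < D) (binz (E - i%:Z) l)%:~R *: Y i (l%:Z - M%:Z).
Proof.
move=> hY1 hY2 hD.
pose Z i l := Y i (l%:Z - M%:Z).
transitivity (\sum_(i < C) \sum_(p < D) \sum_(e < D)
   ((binz b p)%:~R * 'C(p, i)%:R * (binz (E - b) e)%:~R) *: Z i (p - i + e)%N).
  under eq_bigr => p _ do under eq_bigr => e _ do rewrite scaler_sumr.
  under eq_bigr => p _ do rewrite exchange_big.
  rewrite exchange_big; apply: eq_bigr => -[i hi] _; apply: eq_bigr => p _.
  apply: eq_bigr => e _; rewrite /Z scalerA -pmulrn /=; case: (leqP i p) => hip; last first.
    by rewrite bin_small // mulr0n !(mulr0, mul0r) !scale0r.
  congr (_ *: Y _ _); [ring | lia].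
apply: eq_bigr => -[i hi] _ /=; rewrite (@sum_binz_bin_conv b (E - b) i (M + C)).
- by congr (_ *: _); apply: eq_bigr => l _; congr ((binz _ _)%:~R *: _); ring.
- by move=> l hl; apply: hY2; lia.
- lia.
Qed.

End BinomialSums.

Section Modes.
Variables (F : fieldType) (V : lmodType F) (A : VOA V).
Local Notation md := (mode A).

Lemma mode0l k v : md 0 k v = 0.
Proof. by have := mode_linl A k (-1) 0 0 v; rewrite !scaleN1r !addNr. Qed.

Lemma mode0r u k : md u k 0 = 0.
Proof. by have := mode_linr A k (-1) u 0 0; rewrite !scaleN1r !addNr. Qed.

Lemma mode_addl u u' k v : md (u + u') k v = md u k v + md u' k v.
Proof. by have := mode_linl A k 1 u u' v; rewrite !scale1r. Qed.

Lemma mode_addr u k v v' : md u k (v + v') = md u k v + md u k v'.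
Proof. by have := mode_linr A k 1 u v v'; rewrite !scale1r. Qed.

Lemma mode_scalel (c : F) u k v : md (c *: u) k v = c *: md u k v.
Proof. by have := mode_linl A k c u 0 v; rewrite !addr0 mode0l addr0. Qed.

Lemma mode_scaler (c : F) u k v : md u k (c *: v) = c *: md u k v.
Proof. by have := mode_linr A k c u v 0; rewrite !addr0 mode0r addr0. Qed.

Lemma mode_sumr (I : Type) (r : seq I) (P : pred I) (f : I -> V) u k :
  md u k (\sum_(i <- r | P i) f i) = \sum_(i <- r | P i) md u k (f i).
Proof. by elim/big_rec2: _ => [|i x y _ <-]; rewrite ?mode0r ?mode_addr. Qed.

Lemma mode_truncN u v : exists T : nat, forall k : int, T%:Z <= k -> md u k v = 0.
Proof.
have [N hN] := mode_trunc A u v.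
by exists `|N|%N => k hk; apply: hN; apply: le_trans hk; apply: lez_abs.
Qed.

Lemma mode_trunc_uniform (u v : nat -> V) (I : nat) :
  exists T : nat, forall i k, (i < I)%N -> T%:Z <= k -> md (u i) k (v i) = 0.
Proof.
have huv i : exists T0, forall T, (T0 <= T)%N ->
    forall k, T%:Z <= k -> md (u i) k (v i) = 0.
  have [T hT] := mode_truncN (u i) (v i).
  by exists T => T' hT' k hk; apply: hT; apply: le_trans hk; rewrite lez_nat.
have [T hT] := @ex_bound_uniform _ I huv.
by exists T => i k hi; apply: hT.
Qed.

Lemma mode_trunc_fsuppr u (x : nat -> V) B : fsupp x B ->
  exists T : nat, forall i (k : int), T%:Z <= k -> md u k (x i) = 0.
Proof.
move=> hx; have [T hT] := mode_trunc_uniform (fun=> u) x B.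
exists T => i k hk; case: (ltnP i B) => hi; first exact: hT.
by rewrite hx // mode0r.
Qed.

Lemma mode_fsuppl_bound (y : nat -> V) v B : fsupp y B -> exists C : nat,
  (forall i L, (C <= i)%N -> md (y i) L v = 0) /\ (forall i L, C%:Z <= L -> md (y i) L v = 0).
Proof.
move=> hy; have [T hT] := mode_trunc_uniform y (fun=> v) B.
exists (maxn B T); split=> i L.
  by rewrite geq_max => /andP [hi _]; rewrite hy ?mode0l.
move=> hL; case: (ltnP i B) => hi; last by rewrite hy ?mode0l.
by apply: hT => //; apply: le_trans hL; rewrite lez_nat leq_maxr.
Qed.

Lemma fsupp_mode u v (N : int) : exists B, fsupp (fun j => md u (j%:Z - N) v) B.
Proof. by have [T hT] := mode_truncN u v; exists (T + `|N|)%N => j hj; apply: hT; lia. Qed.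

Lemma fsupp_mode_nat u v : exists B, fsupp (fun j => md u j%:Z v) B.
Proof. by have [B hB] := fsupp_mode u v 0; exists B => j /hB; rewrite subr0. Qed.

Lemma mode_commutator u v w (p q : int) :
  md u p (md v q w) - md v q (md u p w)
  = fsum (fun i => (binz p i)%:~R *: md (md u i%:Z v) (p + q - i%:Z) w).
Proof.
have := borcherds A p q 0 u v w.
rewrite (@fsumE _ (fun i => ((-1) ^+ i * (binz 0 i)%:~R) *: _) 1); last first.
  by case=> // i _; rewrite /= bin0n mulr0 scale0r.
rewrite big_ord1 /= expr0 mul1r bin0 !scale1r (_ : Posz 0 = 0) // !addr0 => <-.
by apply: eq_fsum => i; rewrite add0r.
Qed.

Lemma borcherds_negr (u v w : V) (p q : int) (N : nat) :
  fsum (fun i => (binz p i)%:~R *: md (md u (i%:Z - N%:Z) v) (p + q - i%:Z) w)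
  = fsum (fun i => ((-1) ^+ i * (binz (- N%:Z) i)%:~R) *:
      (md u (p - (N + i)%N%:Z) (md v (q + i%:Z) w)
       - (-1) ^+ N *: md v (q - (N + i)%N%:Z) (md u (p + i%:Z) w))).
Proof.
transitivity (fsum (fun i => (binz p i)%:~R *: md (md u (- N%:Z + i%:Z) v) (p + q - i%:Z) w)).
  by apply: eq_fsum => i; rewrite addrC.
rewrite borcherds abszN; apply: eq_fsum => i.
by congr (_ *: (md u _ _ - _ *: md v _ _)); rewrite PoszD; ring.
Qed.

End Modes.

Section Residues.
Variables (F : fieldType) (V : lmodType F) (A : VOA V).
Local Notation md := (mode A).

Lemma resY_big (D : nat) a b K N : (forall j, (D <= j)%N -> md a (j%:Z - N) b = 0) ->
  resY A a b K N = \sum_(j < D) (binz K j)%:~R *: md a (j%:Z - N) b.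
Proof. by move=> h; rewrite /resY (fsumE (B := D)) // => j hj; rewrite h ?scaler0. Qed.

Lemma resY0l y K N : resY A 0 y K N = 0.
Proof. by rewrite (resY_big (D := 0)) ?big_ord0 // => j _; rewrite mode0l. Qed.

Lemma resY0r x K N : resY A x 0 K N = 0.
Proof. by rewrite (resY_big (D := 0)) ?big_ord0 // => j _; rewrite mode0r. Qed.

Lemma fsupp_resY (u v : V) (K N : int) :
  exists B, fsupp (fun j => (binz K j)%:~R *: md u (j%:Z - N) v) B.
Proof. by have [B hB] := fsupp_mode A u v N; exists B => j /hB ->; rewrite scaler0. Qed.

Lemma resY_addl x x' y K N : resY A (x + x') y K N = resY A x y K N + resY A x' y K N.
Proof.
have [B1 h1] := fsupp_resY x y K N; have [B2 h2] := fsupp_resY x' y K N.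
rewrite /resY -(@fsumD _ _ _ (maxn B1 B2)); last 2 first.
- exact: fsupp_mono h1 (leq_maxl _ _).
- exact: fsupp_mono h2 (leq_maxr _ _).
by apply: eq_fsum => j; rewrite mode_addl scalerDr.
Qed.

Lemma resY_addr x y y' K N : resY A x (y + y') K N = resY A x y K N + resY A x y' K N.
Proof.
have [B1 h1] := fsupp_resY x y K N; have [B2 h2] := fsupp_resY x y' K N.
rewrite /resY -(@fsumD _ _ _ (maxn B1 B2)); last 2 first.
- exact: fsupp_mono h1 (leq_maxl _ _).
- exact: fsupp_mono h2 (leq_maxr _ _).
by apply: eq_fsum => j; rewrite mode_addr scalerDr.
Qed.

Lemma resY_scalel (c : F) x y K N : resY A (c *: x) y K N = c *: resY A x y K N.
Proof.
have [B hB] := fsupp_resY x y K N.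
rewrite /resY -(fsumZ _ hB); apply: eq_fsum => j.
by rewrite mode_scalel !scalerA mulrC.
Qed.

Lemma resY_sumr (I : Type) (r : seq I) (x : V) (w : I -> V) K N :
  resY A x (\sum_(i <- r) w i) K N = \sum_(i <- r) resY A x (w i) K N.
Proof.
elim: r => [|i r IH]; first by rewrite !big_nil resY0r.
by rewrite !big_cons resY_addr IH.
Qed.

Lemma resY_resY_big x y c K1 N1 K2 N2 : exists D0, forall D, (D0 <= D)%N ->
  resY A x (resY A y c K2 N2) K1 N1
  = \sum_(j1 < D) \sum_(j2 < D) ((binz K1 j1)%:~R * (binz K2 j2)%:~R) *:
      md x (j1%:Z - N1) (md y (j2%:Z - N2) c).
Proof.
have [B hB] := fsupp_mode A y c N2.
have [T hT] := mode_trunc_fsuppr A x hB.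
exists (B + T + `|N1|)%N => D hD.
rewrite (@resY_big D y c K2 N2); last by move=> j hj; apply: hB; lia.
rewrite (@resY_big D x _ K1 N1); last first.
  move=> j1 hj1; rewrite mode_sumr big1 // => j2 _.
  by rewrite mode_scaler hT ?scaler0 //; lia.
apply: eq_bigr => j1 _; rewrite mode_sumr scaler_sumr; apply: eq_bigr => j2 _.
by rewrite mode_scaler scalerA.
Qed.

Lemma resY_commutator (a b c : V) (K bt : int) (M N : nat) :
  resY A a (resY A b c bt N%:Z) K M%:Z
  = resY A b (resY A a c K M%:Z) bt N%:Z
    + fsum (fun p => (binz K p)%:~R *: fsum (fun q => (binz (- M%:Z) q)%:~R *:
        resY A (md a (q + p)%N%:Z b) c (bt + K - p%:Z) (N + M + q)%N%:Z)).
Proof.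
pose X i L := md (md a i%:Z b) L c.
have [Ca hCa] := fsupp_mode_nat A a b.
have [C [hX1 hX2]] : exists C : nat,
    (forall i L, (C <= i)%N -> X i L = 0) /\ (forall i L, C%:Z <= L -> X i L = 0).
  exact: mode_fsuppl_bound hCa.
have [D1 hD1] := resY_resY_big a b c K M%:Z bt N%:Z.
have [D2 hD2] := resY_resY_big b a c bt N%:Z K M%:Z.
set D := (M + N + 3 * C + D1 + D2)%N.
have hcorr p q : resY A (md a (q + p)%N%:Z b) c (bt + K - p%:Z) (N + M + q)%N%:Z
    = \sum_(j < D) (binz (bt + K - p%:Z) j)%:~R *: X (q + p)%N (j%:Z - (N + M + q)%:Z).
  apply: resY_big => j hj; case: (leqP C (q + p)) => hqp; first exact: hX1.
  by apply: hX2; lia.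
have hinner p : (binz K p)%:~R *: fsum (fun q => (binz (- M%:Z) q)%:~R *:
      resY A (md a (q + p)%N%:Z b) c (bt + K - p%:Z) (N + M + q)%N%:Z)
    = (binz K p)%:~R *: \sum_(q < C) (binz (- M%:Z) q)%:~R *:
      \sum_(j < D) (binz (bt + K - p%:Z) j)%:~R *: X (q + p)%N (j%:Z - (N + M + q)%:Z).
  rewrite (fsumE (B := C)) => [|q hq]; last first.
    by rewrite hcorr big1 ?scaler0 // => j _; rewrite hX1 ?scaler0 //; lia.
  by congr (_ *: _); apply: eq_bigr => q _; rewrite hcorr.
rewrite (hD1 D) ?(hD2 D); try lia.
rewrite (fsumE (B := C)) => [|p hp]; last first.
  rewrite hinner big1 ?scaler0 // => q _.
  by rewrite big1 ?scaler0 // => j _; rewrite hX1 ?scaler0 //; lia.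
rewrite (eq_bigr _ (fun (p : 'I_C) _ => hinner p)).
rewrite -(@sum_binz_commutator _ _ X C K bt M N D hX1 hX2); last by lia.
apply/eqP; rewrite addrC -subr_eq; apply/eqP.
rewrite [X in _ - X]exchange_big -sumrB; apply: eq_bigr => j1 _.
rewrite -sumrB; apply: eq_bigr => j2 _.
rewrite [in X in _ - X]mulrC -scalerBr mode_commutator; congr (_ *: _).
rewrite (fsumE (B := C)) => [|i hi]; last by rewrite [md _ _ c](hX1 i) ?scaler0.
by apply: eq_bigr => i _; rewrite /X; congr (_ *: md _ _ _); ring.
Qed.

Lemma sum_resY_mode_big (a b c : V) (bt E : int) (M N : nat) : exists D0, forall D, (D0 <= D)%N ->
  fsum (fun j => (binz bt j)%:~R *: resY A (md b (j%:Z - N%:Z) c) a (E - j%:Z) M%:Z)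
  = \sum_(p < D) \sum_(e < D) ((binz bt p)%:~R * (binz (E - bt) e)%:~R) *:
      fsum (fun i => (binz p%:Z i)%:~R *:
        md (md b (i%:Z - N%:Z) c) (p%:Z + (e%:Z - M%:Z) - i%:Z) a).
Proof.
pose Y j L := md (md b (j%:Z - N%:Z) c) L a.
have [B hB] := fsupp_mode A b c N%:Z.
have [C [hY1 hY2]] : exists C : nat,
    (forall i L, (C <= i)%N -> Y i L = 0) /\ (forall i L, C%:Z <= L -> Y i L = 0).
  exact: mode_fsuppl_bound hB.
exists (M + 2 * C)%N => D hD.
have hY p e : fsum (fun i => (binz p%:Z i)%:~R *: Y i (p%:Z + (e%:Z - M%:Z) - i%:Z))
    = \sum_(i < C) (binz p%:Z i)%:~R *: Y i (p%:Z + (e%:Z - M%:Z) - i%:Z).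
  by rewrite (fsumE (B := C)) // => i hi; rewrite hY1 ?scaler0.
under eq_bigr => p _ do under eq_bigr => e _ do rewrite hY.
rewrite (@sum_binz_jacobi _ _ Y C bt E M D hY1 hY2) //.
rewrite (fsumE (B := C)) => [|j hj]; last first.
  by rewrite (resY_big (D := 0)) ?big_ord0 ?scaler0 // => l _; exact: hY1.
by apply: eq_bigr => j _; rewrite (resY_big (D := D)) // => l hl; apply: hY2; lia.
Qed.

Lemma sum_resY_resY_big (a b c : V) (bt E : int) (M N : nat) : exists D0, forall D, (D0 <= D)%N ->
  fsum (fun i => ((-1) ^+ i * (binz (- N%:Z) i)%:~R) *:
      (resY A b (resY A c a (E - bt) (M%:Z - i%:Z)) bt (N + i)%N%:Z
       - (-1) ^+ N *: resY A c (resY A b a bt (- i%:Z)) (E - bt) (M + N + i)%N%:Z))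
  = \sum_(p < D) \sum_(e < D) ((binz bt p)%:~R * (binz (E - bt) e)%:~R) *:
      fsum (fun i => ((-1) ^+ i * (binz (- N%:Z) i)%:~R) *:
        (md b (p%:Z - (N + i)%N%:Z) (md c (e%:Z - (M%:Z - i%:Z)) a)
         - (-1) ^+ N *: md c (e%:Z - (M + N + i)%N%:Z) (md b (p%:Z - - i%:Z) a))).
Proof.
have [Tc hTc] := fsupp_mode A c a M%:Z.
have [Tba hTba] := fsupp_mode_nat A b a.
set I := (Tc + Tba)%N.
have hca e i : (I <= i)%N -> md c (e%:Z - (M%:Z - i%:Z)) a = 0.
  by move=> hi; rewrite (_ : _ - _ = (e + i)%N%:Z - M%:Z) ?hTc //; [lia | rewrite PoszD; ring].
have hba p i : (I <= i)%N -> md b (p%:Z - - i%:Z) a = 0.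
  by move=> hi; rewrite opprK -PoszD hTba //; lia.
have [D1 hD1] := @ex_bound_uniform _ I
  (fun i => resY_resY_big b c a bt (N + i)%N%:Z (E - bt) (M%:Z - i%:Z)).
have [D2 hD2] := @ex_bound_uniform _ I
  (fun i => resY_resY_big c b a (E - bt) (M + N + i)%N%:Z bt (- i%:Z)).
exists (D1 + D2)%N => D hD.
rewrite (fsumE (B := I)) => [|i hi]; last first.
  rewrite (resY_big (D := 0) _ (fun j _ => hca j i hi)).
  rewrite (resY_big (D := 0) _ (fun j _ => hba j i hi)) !big_ord0.
  by rewrite !resY0r scaler0 subr0 scaler0.
have hfin p e : fsum (fun i => ((-1) ^+ i * (binz (- N%:Z) i)%:~R) *:
      (md b (p%:Z - (N + i)%N%:Z) (md c (e%:Z - (M%:Z - i%:Z)) a)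
       - (-1) ^+ N *: md c (e%:Z - (M + N + i)%N%:Z) (md b (p%:Z - - i%:Z) a)))
    = \sum_(i < I) ((-1) ^+ i * (binz (- N%:Z) i)%:~R) *:
      (md b (p%:Z - (N + i)%N%:Z) (md c (e%:Z - (M%:Z - i%:Z)) a)
       - (-1) ^+ N *: md c (e%:Z - (M + N + i)%N%:Z) (md b (p%:Z - - i%:Z) a)).
  by rewrite (fsumE (B := I)) // => i hi; rewrite hca // hba // !mode0r scaler0 subr0 scaler0.
symmetry; under eq_bigr => p _ do under eq_bigr => e _ do rewrite hfin scaler_sumr.
under eq_bigr => p _ do rewrite exchange_big.
rewrite exchange_big; apply: eq_bigr => -[i hi] _ /=.
rewrite (hD1 i D) ?(hD2 i D) //; try lia.
rewrite [X in _ = _ *: (_ - _ *: X)]exchange_big /= scalerBr !scaler_sumr -sumrB.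
apply: eq_bigr => p _; rewrite !scaler_sumr -sumrB; apply: eq_bigr => e _.
by rewrite !scalerBr !scalerA; congr (_ *: _ - _ *: _); ring.
Qed.

Lemma resY_jacobi (a b c : V) (bt E : int) (M N : nat) :
  fsum (fun j => (binz bt j)%:~R *: resY A (md b (j%:Z - N%:Z) c) a (E - j%:Z) M%:Z)
  = fsum (fun i => ((-1) ^+ i * (binz (- N%:Z) i)%:~R) *:
      (resY A b (resY A c a (E - bt) (M%:Z - i%:Z)) bt (N + i)%N%:Z
       - (-1) ^+ N *: resY A c (resY A b a bt (- i%:Z)) (E - bt) (M + N + i)%N%:Z)).
Proof.
have [D1 h1] := sum_resY_mode_big a b c bt E M N.
have [D2 h2] := sum_resY_resY_big a b c bt E M N.
rewrite (h1 (D1 + D2)) ?leq_addr // (h2 (D1 + D2)) ?leq_addl //.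
apply: eq_bigr => p _; apply: eq_bigr => e _; congr (_ *: _).
rewrite borcherds_negr; apply: eq_fsum => i.
by congr (_ *: (md b _ (md c _ a) - _ *: md c _ (md b _ a))); ring.
Qed.

End Residues.

Section SpanOn.
Variables (F : fieldType) (V : lmodType F) (A : VOA V) (n : nat).
Local Notation On := (On A n).

Lemma On0 : On 0.
Proof. by exists 0%N, (fun _ => 0), (fun _ => 0); split => [[]|]; rewrite ?big_ord0. Qed.

Lemma OnD x y : On x -> On y -> On (x + y).
Proof.
move=> [m1 [c1 [g1 [hg1 ->]]]] [m2 [c2 [g2 [hg2 ->]]]].
exists (m1 + m2)%N, (fun i => match split i with inl j => c1 j | inr j => c2 j end),
  (fun i => match split i with inl j => g1 j | inr j => g2 j end); split.
  by move=> i; case: (split i).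
rewrite big_split_ord /=; congr (_ + _); apply: eq_bigr => i _.
  by rewrite (unsplitK (inl _ i)).
by rewrite (unsplitK (inr _ i)).
Qed.

Lemma OnZ (a : F) x : On x -> On (a *: x).
Proof.
move=> [m [c [g [hg ->]]]]; exists m, (fun i => a * c i), g; split => //.
by rewrite scaler_sumr; apply: eq_bigr => i _; rewrite scalerA.
Qed.

Lemma OnB x y : On x -> On y -> On (x - y).
Proof. by move=> hx /(OnZ (-1)); rewrite scaleN1r; apply: OnD. Qed.

Lemma On_gen_On x : On_gen A n x -> On x.
Proof.
move=> h; exists 1%N, (fun _ => 1), (fun _ => x); split => //.
by rewrite big_ord1 scale1r.
Qed.

Lemma On_sum (I : Type) (r : seq I) (P : pred I) (f : I -> V) :
  (forall i, P i -> On (f i)) -> On (\sum_(i <- r | P i) f i).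
Proof.
move=> h; elim/big_rec: _ => [|i x Pi hx]; first exact: On0.
by apply: OnD => //; apply: h.
Qed.

Lemma On_fsum (f : nat -> V) : (forall i, On (f i)) -> On (fsum f).
Proof.
move=> h; rewrite /fsum; case: excluded_middle_informative => [H|_]; last exact: On0.
exact: On_sum.
Qed.

End SpanOn.

Section LinearExtension.
Variables (F : fieldType) (V : lmodType F) (A : VOA V).

Lemma big_uniq_supp (g : int -> V) (s1 s2 : seq int) : uniq s1 -> uniq s2 ->
  (forall k, k \notin s1 -> g k = 0) -> (forall k, k \notin s2 -> g k = 0) ->
  \sum_(k <- s1) g k = \sum_(k <- s2) g k.
Proof.
move=> u1 u2 h1 h2.
have e1 : \sum_(k <- s1) g k = \sum_(k <- s1 | k \in s2) g k.
  by rewrite [RHS]big_mkcond; apply: eq_bigr => k _; case: ifP => // /negbT /h2.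
have e2 : \sum_(k <- s2) g k = \sum_(k <- s2 | k \in s1) g k.
  by rewrite [RHS]big_mkcond; apply: eq_bigr => k _; case: ifP => // /negbT /h1.
rewrite e1 e2 -[LHS]big_filter -[RHS]big_filter; apply: perm_big.
by apply: uniq_perm; rewrite ?filter_uniq // => k; rewrite !mem_filter andbC.
Qed.

Lemma isumE (g : int -> V) (s : seq int) : uniq s ->
  (forall k, k \notin s -> g k = 0) -> isum g = \sum_(k <- s) g k.
Proof.
move=> us hs; rewrite /isum; case: excluded_middle_informative => [H|[]]; last by exists s.
case: (constructive_indefinite_description _ H) => s0 hs0 /=.
by apply: big_uniq_supp; rewrite ?undup_uniq // => k; rewrite mem_undup => /hs0.
Qed.

Lemma proj_add k x y : proj A k (x + y) = proj A k x + proj A k y.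
Proof. by have := proj_linear A k 1 x y; rewrite !scale1r. Qed.

Lemma proj0 k : proj A k 0 = 0.
Proof. by have := proj_linear A k (-1) 0 0; rewrite !scaleN1r !addNr. Qed.

Lemma proj_scale k (c : F) x : proj A k (c *: x) = c *: proj A k x.
Proof. by have := proj_linear A k c x 0; rewrite !addr0 proj0 addr0. Qed.

Variable f : int -> V -> V -> V.
Hypothesis f0 : forall k b, f k 0 b = 0.

Lemma lin_extE (a b : V) (s : seq int) : uniq s -> (forall k, k \notin s -> proj A k a = 0) ->
  lin_ext A f a b = \sum_(k <- s) f k (proj A k a) b.
Proof. by move=> us hs; rewrite /lin_ext (isumE us) // => k /hs ->. Qed.

Lemma lin_ext_homog (a b : V) (d : int) : homog A d a -> lin_ext A f a b = f d a b.
Proof.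
move=> ha; rewrite (@lin_extE a b [:: d]) ?big_seq1 ?ha // => k.
by rewrite inE -ha proj_proj => /negbTE ->.
Qed.

Hypothesis fD : forall k u v b, f k (u + v) b = f k u b + f k v b.

Lemma lin_extD (x y b : V) : lin_ext A f (x + y) b = lin_ext A f x b + lin_ext A f y b.
Proof.
have [sx [_ _ hx]] := proj_decomp A x; have [sy [_ _ hy]] := proj_decomp A y.
set s := undup (sx ++ sy).
have hs k : k \notin s -> (k \notin sx) && (k \notin sy).
  by rewrite mem_undup mem_cat negb_or.
have hx' k : k \notin s -> proj A k x = 0 by move/hs/andP => [/hx].
have hy' k : k \notin s -> proj A k y = 0 by move/hs/andP => [_ /hy].
have us : uniq s := undup_uniq _.
rewrite (lin_extE b us hx') (lin_extE b us hy') (@lin_extE (x + y) b s us); last first.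
  by move=> k hk; rewrite proj_add hx' ?hy' ?addr0.
by rewrite -big_split; apply: eq_bigr => k _; rewrite proj_add fD.
Qed.

Lemma lin_ext_sum (I : Type) (r : seq I) (w : I -> V) (b : V) :
  lin_ext A f (\sum_(i <- r) w i) b = \sum_(i <- r) lin_ext A f (w i) b.
Proof.
elim: r => [|i r IH]; last by rewrite !big_cons lin_extD IH.
by rewrite !big_nil (@lin_extE _ _ [::]) ?big_nil // => k _; rewrite proj0.
Qed.

Hypothesis fZ : forall k (c : F) u b, f k (c *: u) b = c *: f k u b.

Lemma lin_extZ (c : F) (x b : V) : lin_ext A f (c *: x) b = c *: lin_ext A f x b.
Proof.
have [sx [ux _ hx]] := proj_decomp A x.
rewrite !(@lin_extE _ b sx) // => [|k hk]; last by rewrite proj_scale hx ?scaler0.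
by rewrite scaler_sumr; apply: eq_bigr => k _; rewrite proj_scale fZ.
Qed.

End LinearExtension.

Section StarCirc.
Variables (F : fieldType) (V : lmodType F) (A : VOA V) (n : nat).
Local Notation md := (mode A).
Local Notation On := (On A n).

Lemma star_h0 k y : star_h A n k 0 y = 0.
Proof. by rewrite /star_h big1 // => m _; rewrite resY0l scaler0. Qed.

Lemma star_hD k u v y : star_h A n k (u + v) y = star_h A n k u y + star_h A n k v y.
Proof. by rewrite /star_h -big_split; apply: eq_bigr => m _; rewrite resY_addl scalerDr. Qed.

Lemma star_hZ k (c : F) u y : star_h A n k (c *: u) y = c *: star_h A n k u y.
Proof.
rewrite /star_h scaler_sumr; apply: eq_bigr => m _.
by rewrite resY_scalel !scalerA mulrC.
Qed.

Lemma homog_mode (da db : int) a b (k : int) : homog A da a -> homog A db b ->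
  homog A (da + db - k - 1) (md a k b).
Proof. exact: mode_deg. Qed.

Lemma circ_homog (s t : nat) (b c : V) (db : int) : homog A db b ->
  circ A n s t b c = resY A b c (db + n%:Z + s%:Z) (2 * n%:Z + 2 + t%:Z).
Proof. by move=> hb; rewrite /circ (lin_ext_homog _ _ hb) // => k y; rewrite /circ_h resY0l. Qed.

Lemma On_resY (x y : V) (d : int) (s t : nat) (K N : int) :
  homog A d x -> (s <= t)%N -> K = d + n%:Z + s%:Z -> N = 2 * n%:Z + 2 + t%:Z ->
  On (resY A x y K N).
Proof.
move=> hx hst -> ->; apply: On_gen_On; left; exists x, y, s, t; split => //.
by rewrite (circ_homog _ _ _ hx).
Qed.

Variables (s t : nat).
Hypothesis hst : (s <= t)%N.

Lemma On_resY_circ (da db : int) (a b c : V) (r M : nat) :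
  homog A da a -> homog A db b -> (r <= M)%N ->
  On (resY A a (circ A n s t b c) (da + r%:Z - 1) M%:Z).
Proof.
move=> ha hb hrM; rewrite (circ_homog _ _ _ hb).
rewrite (_ : 2 * n%:Z + 2 + t%:Z = (2 * n + 2 + t)%N%:Z); last by lia.
rewrite resY_commutator; apply: OnD; first by apply: (@On_resY _ _ db s t) => //; lia.
apply: On_fsum => p; apply: OnZ; apply: On_fsum => q; apply: OnZ.
apply: (@On_resY _ _ (da + db - (q + p)%N%:Z - 1) (s + r + q) (t + M + q)); try lia.
exact: homog_mode.
Qed.

Lemma On_star_circl (a b c : V) (db : int) : homog A db b ->
  On (star A n a (circ A n s t b c)).
Proof.
move=> hb; have [sa [ua _ hsa]] := proj_decomp A a.
rewrite /star (lin_extE star_h0 _ ua hsa); apply: On_sum => k _.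
apply: On_sum => m _; apply: OnZ.
have hk : homog A k (proj A k a) by rewrite /homog proj_proj eqxx.
have := @On_resY_circ k db (proj A k a) b c (n + 1) (n + m + 1) hk hb.
rewrite (_ : k + (n + 1)%N%:Z - 1 = k + n%:Z); last by rewrite PoszD; ring.
by rewrite (_ : (n + m + 1)%N%:Z = n%:Z + m%:Z + 1) ?PoszD //; apply; lia.
Qed.

Lemma On_star_circr_homog (a b c : V) (db dc : int) : homog A db b -> homog A dc c ->
  On (star A n (circ A n s t b c) a).
Proof.
move=> hb hc; rewrite (circ_homog _ _ _ hb).
set N := (2 * n + 2 + t)%N; rewrite (_ : 2 * n%:Z + 2 + t%:Z = N%:Z); last by rewrite /N; lia.
set bt := db + n%:Z + s%:Z; set E := db + dc + N%:Z - 1 + n%:Z.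
have [B hB] := fsupp_mode A b c N%:Z.
have hBr : fsupp (fun j => (binz bt j)%:~R *: md b (j%:Z - N%:Z) c) B.
  by move=> j /hB ->; rewrite scaler0.
have hstar j : lin_ext A (star_h A n) ((binz bt j)%:~R *: md b (j%:Z - N%:Z) c) a
    = \sum_(m < n.+1) ((-1) ^+ m * ('C(m + n, n))%:R) *:
        ((binz bt j)%:~R *: resY A (md b (j%:Z - N%:Z) c) a (E - j%:Z) (n + m + 1)%N%:Z).
  rewrite (lin_extZ _ star_h0 star_hZ) (lin_ext_homog star_h0 _ (homog_mode (j%:Z - N%:Z) hb hc)).
  rewrite /star_h scaler_sumr; apply: eq_bigr => m _; rewrite !scalerA [X in X *: _ = _]mulrC.
  by congr (_ *: resY _ _ _ _ _); rewrite /E ?PoszD; ring.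
rewrite /resY (fsumE hBr) /star (lin_ext_sum _ star_h0 star_hD).
rewrite (eq_bigr _ (fun (j : 'I_B) _ => hstar j)) exchange_big /=; apply: On_sum => m _.
rewrite -scaler_sumr; apply: OnZ.
rewrite -(fsumE (f := fun j => (binz bt j)%:~R *:
  resY A (md b (j%:Z - N%:Z) c) a (E - j%:Z) (n + m + 1)%N%:Z)); last first.
  by move=> j /hB ->; rewrite resY0l scaler0.
rewrite resY_jacobi; apply: On_fsum => i; apply: OnZ; apply: OnB; last apply: OnZ.
- by apply: (@On_resY _ _ db s (t + i)) => //; rewrite /bt /N; lia.
- apply: (@On_resY _ _ dc (n + 1 + t - s) (n + m + 1 + t + i)) => //; rewrite /E /bt /N; lia.
Qed.

Lemma On_star_circr (a b c : V) (db : int) : homog A db b ->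
  On (star A n (circ A n s t b c) a).
Proof.
move=> hb; have [sc [_ ec _]] := proj_decomp A c.
rewrite (circ_homog _ _ _ hb) ec resY_sumr /star (lin_ext_sum _ star_h0 star_hD).
apply: On_sum => l _; rewrite -(circ_homog _ _ _ hb).
by apply: (@On_star_circr_homog a b (proj A l c) db l hb); rewrite /homog proj_proj eqxx.
Qed.

End StarCirc.

Theorem mainTheorem3 (F : closedFieldType) (hF : (2%:R : F) != 0)
  (V : lmodType F) (A : VOA V) (n s t : nat) (hst : (s <= t)%N) :
  (forall a b c : V, (exists db, homog A db b) ->
     On A n (star A n a (circ A n s t b c)) /\ On A n (star A n (circ A n s t b c) a))
  /\
  (forall (da db dc : int) (a b c : V), homog A da a -> homog A db b -> homog A dc c ->
     On A n (star A n a (circ A n s t b c)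
        - \sum_(m < n.+1) ((-1) ^+ m * ('C(m + n, n))%:R) *:
            fsum (fun j => (binz (da + n%:Z) j)%:~R *:
              fsum (fun i => (binz (- n%:Z - m%:Z - 1) i)%:~R *:
                circ A n (i + n + 1 + s) (n + m + 1 + i + t) (mode A a (i%:Z + j%:Z) b) c)))
     /\
     On A n (resY A a (circ A n s t b c) (da - 1) 0
        - fsum (fun j => (binz (da - 1) j)%:~R *: circ A n s t (mode A a j%:Z b) c))).
Proof.
have On_circ (s' t' : nat) (x y : V) : (s' <= t')%N -> On A n (circ A n s' t' x y).
  by move=> hst'; apply: On_gen_On; left; exists x, y, s', t'.
split=> [a b c [db hb] | da db dc a b c ha hb hc].
  by split; [exact (On_star_circl n hst a c hb) | exact (On_star_circr n hst a c hb)].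
split; apply: OnB.
- exact (On_star_circl n hst a c hb).
- apply: On_sum => m _; apply: OnZ; apply: On_fsum => j; apply: OnZ.
  by apply: On_fsum => i; apply: OnZ; apply: On_circ; lia.
- by have := On_resY_circ n hst c ha hb (leqnn 0); rewrite addr0.
- by apply: On_fsum => j; apply: OnZ; apply: On_circ.
Qed.
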